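(* Let $\alpha>0$, $\gamma<0$, $\theta=(\alpha,-(\alpha+\gamma)/4,\gamma)$, and let $R$ be a representation of $\mathbf{Q}$ with dimension vector $(1,4,1)$ that is $\theta$-stable. If $R$ is not globally injective, then $\gamma<-\alpha$. If $R$ is not globally surjective, then $\gamma>-\alpha$.
   Context: The quiver $\mathbf{Q}$ has vertices $-1,0,1$, arrows $\eta_0,\dots,\eta_3:-1\to0$, $\phi_0,\dots,\phi_3:0\to1$ and relations $\phi_i\eta_j+\phi_j\eta_i=0$; a representation consists of vector spaces $V_{-1},V_0,V_1$ and linear maps $f_i:V_{-1}\to V_0$, $g_i:V_0\to V_1$ with $g_if_j+g_jf_i=0$. $R$ is globally injective (resp. surjective) if $\sum\lambda_if_i$ is injective (resp. $\sum\lambda_ig_i$ surjective) for all $\lambda\in\mathbb{C}^4\setminus\{0\}$. $R$ is $\theta$-stable if $\theta\cdot\dim R=0$ and $\theta\cdot\dim S<0$ for every nonzero proper subrepresentation $S$. *)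

From HB Require Import structures.
From mathcomp Require Import all_boot all_order all_algebra.
From mathcomp Require Import complex.
From mathcomp Require Import reals.
Set Implicit Arguments. Unset Strict Implicit. Unset Printing Implicit Defensive.
Import Order.TTheory GRing.Theory Num.Theory.
Local Open Scope ring_scope.

(* A representation of Q with dimension vector (1,4,1), in coordinates:
   V_{-1} = K^1, V_0 = K^4, V_1 = K^1 (row vectors, maps act on the right:
   x |-> x *m f i).  f i : V_{-1} -> V_0, g i : V_0 -> V_1. *)
Record rep141 (K : fieldType) := Rep141 {
  rf : 'I_4 -> 'M[K]_(1, 4);
  rg : 'I_4 -> 'M[K]_(4, 1) }.

(* relations g_i f_j + g_j f_i = 0 (composition "g_i after f_j" is f j *m g i) *)
Definition rep_relations (K : fieldType) (Rp : rep141 K) : Prop :=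
  forall i j : 'I_4, rf Rp j *m rg Rp i + rf Rp i *m rg Rp j = 0.

Definition fsum (K : fieldType) (Rp : rep141 K) (l : 'rV[K]_4) : 'M[K]_(1, 4) :=
  \sum_(i < 4) l 0 i *: rf Rp i.
Definition gsum (K : fieldType) (Rp : rep141 K) (l : 'rV[K]_4) : 'M[K]_(4, 1) :=
  \sum_(i < 4) l 0 i *: rg Rp i.

Definition globally_injective (K : fieldType) (Rp : rep141 K) : Prop :=
  forall l : 'rV[K]_4, l != 0 -> row_free (fsum Rp l).
Definition globally_surjective (K : fieldType) (Rp : rep141 K) : Prop :=
  forall l : 'rV[K]_4, l != 0 -> row_full (gsum Rp l).

(* A subrepresentation: subspaces S_{-1} <= K^1, S_0 <= K^4, S_1 <= K^1
   (given as row spaces of square matrices) stable under all arrows. *)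
Definition is_subrep (K : fieldType) (Rp : rep141 K)
  (Sm : 'M[K]_1) (S0 : 'M[K]_4) (S1 : 'M[K]_1) : Prop :=
  forall i : 'I_4, (Sm *m rf Rp i <= S0)%MS /\ (S0 *m rg Rp i <= S1)%MS.

Definition theta_dot (R : numDomainType) (t : R * R * R) (a b c : nat) : R :=
  t.1.1 *+ a + t.1.2 *+ b + t.2 *+ c.

Definition theta_stable (R : numDomainType) (K : fieldType) (t : R * R * R)
  (Rp : rep141 K) : Prop :=
  theta_dot t 1 4 1 = 0 /\
  forall Sm S0 S1, is_subrep Rp Sm S0 S1 ->
    (\rank Sm + \rank S0 + \rank S1 != 0)%N ->
    ~~ [&& \rank Sm == 1, \rank S0 == 4 & \rank S1 == 1]%N ->
    theta_dot t (\rank Sm) (\rank S0) (\rank S1) < 0.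

From HB Require Import structures.
From mathcomp Require Import all_boot all_order all_algebra.
From mathcomp Require Import complex.
From mathcomp Require Import reals.
From mathcomp Require Import ring lra.
Set Implicit Arguments. Unset Strict Implicit. Unset Printing Implicit Defensive.
Import Order.TTheory GRing.Theory Num.Theory.
Local Open Scope ring_scope.

(* Since V_{-1} and V_1 are lines, R fails to be globally injective (resp.
   surjective) only if some nontrivial combination sum l_i f_i (resp.
   sum l_i g_i) vanishes.  In the first case the f_i span a subspace of V_0 of
   dimension k <= 3, and (V_{-1}, <f_i>, V_1) is a subrepresentation of weight
   (alpha + gamma)(1 - k/4); in the second case the common kernel of the g_i
   has dimension k >= 1 and (0, ker, 0) is a subrepresentation of weight
   -(alpha + gamma) k/4.  Stability makes these weights negative. *)

Lemma row_free_rV (K : fieldType) (n : nat) (v : 'rV[K]_n) :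
  row_free v = (v != 0).
Proof.
rewrite /row_free -mxrank_eq0.
by have := rank_leq_row v; case: (\rank v) => [|[]].
Qed.

Lemma row_full_cV (K : fieldType) (n : nat) (w : 'cV[K]_n) :
  row_full w = (w != 0).
Proof.
rewrite /row_full -mxrank_eq0.
by have := rank_leq_col w; case: (\rank w) => [|[]].
Qed.

Lemma mulmx_row_free_neq0 (K : fieldType) (m n : nat)
    (l : 'rV[K]_m) (A : 'M[K]_(m, n)) :
  row_free A -> l != 0 -> l *m A != 0.
Proof.
move=> /row_free_inj A_inj; apply: contra => /eqP lA0.
by apply/eqP/A_inj; rewrite lA0 mul0mx.
Qed.

Section Arrows.

Variables (K : fieldType) (Rp : rep141 K).

Definition fmx : 'M[K]_4 := \matrix_i rf Rp i.
Definition gmx : 'M[K]_4 := \matrix_i (rg Rp i)^T.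

Lemma fsumE (l : 'rV[K]_4) : fsum Rp l = l *m fmx.
Proof. by rewrite mulmx_sum_row; apply: eq_bigr => i _; rewrite rowK. Qed.

Lemma gsumE (l : 'rV[K]_4) : gsum Rp l = (l *m gmx)^T.
Proof.
rewrite mulmx_sum_row linear_sum; apply: eq_bigr => i _.
by rewrite linearZ /= rowK trmxK.
Qed.

Lemma rg_colE (i : 'I_4) : rg Rp i = gmx^T *m delta_mx i 0.
Proof. by rewrite -colE -tr_row rowK trmxK. Qed.

Lemma row_free_globally_injective : row_free fmx -> globally_injective Rp.
Proof.
by move=> fmx_free l l_neq0; rewrite row_free_rV fsumE mulmx_row_free_neq0.
Qed.

Lemma row_free_globally_surjective : row_free gmx -> globally_surjective Rp.
Proof.
move=> gmx_free l l_neq0.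
by rewrite row_full_cV gsumE trmx_eq0 mulmx_row_free_neq0.
Qed.

Lemma not_globally_injective_rank :
  ~ globally_injective Rp -> (\rank fmx < 4)%N.
Proof.
move=> not_inj; rewrite ltn_neqAle rank_leq_row andbT.
by apply: contra_notN not_inj => fmx_free; apply: row_free_globally_injective.
Qed.

Lemma not_globally_surjective_rank :
  ~ globally_surjective Rp -> (\rank gmx < 4)%N.
Proof.
move=> not_surj; rewrite ltn_neqAle rank_leq_row andbT.
by apply: contra_notN not_surj => gmx_free; apply: row_free_globally_surjective.
Qed.

Lemma is_subrep_image : is_subrep Rp 1%:M fmx 1%:M.
Proof.
move=> i; split; last exact: submx1.
by rewrite mul1mx -[rf Rp i](rowK (rf Rp)) row_sub.
Qed.

Lemma is_subrep_common_kernel : is_subrep Rp 0 (kermx gmx^T) 0.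
Proof.
move=> i; rewrite mul0mx sub0mx; split=> //.
by rewrite rg_colE mulmxA mulmx_ker mul0mx sub0mx.
Qed.

End Arrows.

Lemma theta_dot_balanced (R : numFieldType) (a c : R) (n k : nat) :
  theta_dot (a, - (a + c) / 4, c) n k n = (a + c) * (n%:R - k%:R / 4).
Proof. by rewrite /theta_dot /=; ring. Qed.

Theorem mainTheorem12 (R : realType) (alpha gamma : R)
  (Rp : rep141 (R[i])) :
  0 < alpha -> gamma < 0 ->
  rep_relations Rp ->
  theta_stable (alpha, - (alpha + gamma) / 4, gamma) Rp ->
  (~ globally_injective Rp -> gamma < - alpha) /\
  (~ globally_surjective Rp -> gamma > - alpha).
Proof.
move=> _ _ _ [_ stable]; split.
- move=> /not_globally_injective_rank rk_f.
  have := stable _ _ _ (is_subrep_image Rp).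
  rewrite !mxrank1 (ltn_eqF rk_f) theta_dot_balanced => /(_ isT isT).
  have : (\rank (fmx Rp))%:R <= 3 :> R by rewrite ler_nat -ltnS.
  nra.
- move=> /not_globally_surjective_rank rk_g.
  have := stable _ _ _ (is_subrep_common_kernel Rp).
  rewrite !mxrank0 mxrank_ker mxrank_tr theta_dot_balanced sub0r.
  have rk_ker : (0 < 4 - \rank (gmx Rp))%N by rewrite subn_gt0.
  rewrite add0n addn0 -lt0n rk_ker => /(_ isT isT).
  have : 1 <= (4 - \rank (gmx Rp))%:R :> R by rewrite ler1n.
  nra.
Qed.
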